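(* Let $\bm A\in\mathbb{R}^{n\times n}$ be a graph adjacency matrix as in the context, and let $\bm M\in\{0,1\}^{n\times d}$ be a fixed (non-random) mask matrix such that every column $j$ contains at least one observed entry, i.e. $S_j:=\{1\le k\le n : \bm M_{k,j}=1\}\neq\emptyset$. Let $\bm X\in\mathbb{R}^{n\times d}$ be a random matrix whose entries $\bm X_{i,j}$ are independent and identically distributed with $\mathbb{E}(\bm X_{i,j})=0$ and $\mathrm{Var}(\bm X_{i,j})=1$. Define the imputed matrix $\hat{\bm X}\in\mathbb{R}^{n\times d}$ by $\hat{\bm X}_{i,j}=\bm X_{i,j}$ if $\bm M_{i,j}=1$, and, if $\bm M_{i,j}=0$, by $$\hat{\bm X}_{i,j}=\sum_{k\in S_j}\alpha^{(i,j)}_k\,\bm X_{k,j},$$ where for each missing position $(i,j)$ the weights $\alpha^{(i,j)}_k$ are fixed (non-random) real numbers with $\alpha^{(i,j)}_k\ge 0$ and $\sum_{k\in S_j}\alpha^{(i,j)}_k=1$ (i.e. each missing entry is filled by a convex combination of observed entries of the same column). Then $$\mathbb{E}\big[E_D(\hat{\bm X})\big]\le \mathbb{E}\big[E_D(\bm X)\big].$$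
   Context: A graph on $n$ nodes is given by an adjacency matrix $\bm A\in\mathbb{R}^{n\times n}$ that is symmetric, has nonnegative entries and zero diagonal. $\bm D$ is the diagonal degree matrix with $\bm D_{i,i}=\sum_j \bm A_{i,j}$. Set $\tilde{\bm A}=\bm A+\bm I_n$, $\tilde{\bm D}=\bm D+\bm I_n$, and the augmented normalized Laplacian $\tilde{\Delta}=\bm I_n-\tilde{\bm D}^{-1/2}\tilde{\bm A}\tilde{\bm D}^{-1/2}$. For a feature matrix $\bm X\in\mathbb{R}^{n\times d}$ (row $i$ = features of node $i$), the graph Dirichlet energy is $$E_D(\bm X)=\mathrm{tr}\big(\bm X^T\tilde{\Delta}\bm X\big)=\frac12\sum_{i,j=1}^n \bm A_{i,j}\Big\|\frac{\bm X_{i,:}}{\sqrt{1+\bm D_{i,i}}}-\frac{\bm X_{j,:}}{\sqrt{1+\bm D_{j,j}}}\Big\|^2,$$ with $\|\cdot\|$ the Euclidean norm. A mask matrix $\bm M\in\{0,1\}^{n\times d}$ indicates that entry $\bm X_{i,j}$ is observed iff $\bm M_{i,j}=1$. *)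

From HB Require Import structures.
From mathcomp Require Import all_boot all_order all_algebra.
From mathcomp Require Import all_classical all_reals all_analysis.
Set Implicit Arguments. Unset Strict Implicit. Unset Printing Implicit Defensive.
Import Order.TTheory GRing.Theory Num.Theory.
Local Open Scope classical_set_scope.
Local Open Scope ring_scope.

Definition is_adjacency (R : realType) (n : nat) (A : 'M[R]_n) : Prop :=
  A^T = A /\ (forall i j, 0 <= A i j) /\ (forall i, A i i = 0).

Definition deg (R : realType) (n : nat) (A : 'M[R]_n) (i : 'I_n) : R :=
  \sum_(j < n) A i j.

(* augmented normalized Laplacian  I - D~^{-1/2} A~ D~^{-1/2},
   with A~ = A + I, D~ = D + I *)
Definition aug_laplacian (R : realType) (n : nat) (A : 'M[R]_n) : 'M[R]_n :=
  \matrix_(i, j) ((i == j)%:R -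
     (A i j + (i == j)%:R) / (Num.sqrt (1 + deg A i) * Num.sqrt (1 + deg A j))).

Definition dirichlet_energy (R : realType) (n d : nat) (A : 'M[R]_n)
  (X : 'M[R]_(n, d)) : R :=
  \tr (X^T *m aug_laplacian A *m X).

Definition mutually_independent {dT} {T : measurableType dT} (R : realType)
  (P : probability T R) (I : finType) (X : I -> T -> R) : Prop :=
  forall (J : {set I}) (B : I -> set R),
    (forall i, measurable (B i)) ->
    P (\bigcap_(i in [set` J]) (X i @^-1` B i)) =
    (\prod_(i in J) P (X i @^-1` B i))%E.

Definition identically_distributed {dT} {T : measurableType dT} (R : realType)
  (P : probability T R) (I : Type) (X : I -> T -> R) : Prop :=
  forall i k (B : set R), measurable B -> P (X i @^-1` B) = P (X k @^-1` B).

Definition imputed (R : realType) (n d : nat) (M : 'M[bool]_(n, d))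
  (alpha : 'I_n -> 'I_d -> 'I_n -> R) (X : 'M[R]_(n, d)) : 'M[R]_(n, d) :=
  \matrix_(i, j) (if M i j then X i j
                  else \sum_(k < n | M k j) alpha i j k * X k j).

From HB Require Import structures.
From mathcomp Require Import all_boot all_order all_algebra.
From mathcomp Require Import all_classical all_reals all_analysis.
From mathcomp Require Import measurable_realfun.
From mathcomp Require Import ring.
Import Order.TTheory GRing.Theory Num.Theory.
Local Open Scope classical_set_scope.
Local Open Scope ring_scope.

(* Both X and its imputation are column-wise linear mixtures of the entries
   of X: column j of the mixture with weights b j is (sum_k b j i k X_kj)_i.
   Since E_D(Y) = sum_j Y_{.j}^T L Y_{.j} for the augmented Laplacian L, and
   the entries of X are orthonormal in L^2 (centred, unit variance,
   independent), the expected energy of a mixture is sum_j <L, G_j> where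
   G_j is the Gram matrix of the rows of b j.  For X itself G_j = I; for the
   imputation G_j is entrywise nonnegative with diagonal at most 1, because
   each row of weights is a probability vector.  As L has a nonnegative
   diagonal and nonpositive off-diagonal entries, <L, G_j> <= <L, I>. *)

Set Implicit Arguments. Unset Strict Implicit.

Section independent_products.
Context (R : realType) (dT : measure_display) (T : measurableType dT).
Context (P : probability T R).
Local Open Scope ereal_scope.

Definition independent_pair (X Y : T -> R) : Prop :=
  forall A B : set R, measurable A -> measurable B ->
  P (X @^-1` A `&` Y @^-1` B) = P (X @^-1` A) * P (Y @^-1` B).

(* Mutual independence of a family specializes to any two distinct members:
   use the Borel sets A at p, B at q and R elsewhere on the subfamily {p, q}. *)
Lemma independent_pair_of_mutual (I : finType) (F : I -> T -> R) (p q : I) :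
  mutually_independent P F -> p != q -> independent_pair (F p) (F q).
Proof.
move=> indF pq A B mA mB.
have qp : q != p by rewrite eq_sym.
pose G i := if i == p then A else if i == q then B else setT.
have mG i : measurable (G i) by rewrite /G; case: ifP => // _; case: ifP.
have := indF [set p; q]%SET G mG.
rewrite big_setU1 ?inE// /= big_set1 {2 3}/G eqxx (negbTE qp) eqxx => <-.
congr (P _); apply/seteqP; split => w /=.
- move=> [hA hB] i; rewrite /= in_set2 => /orP[/eqP->|/eqP->].
    by rewrite /G eqxx.
  by rewrite /G (negbTE qp) eqxx.
- move=> h; split.
    by have := h p; rewrite /= in_set2 eqxx /G eqxx => /(_ isT).
  by have := h q; rewrite /= in_set2 eqxx orbT /G (negbTE qp) eqxx => /(_ isT).
Qed.

Lemma independent_pair_comp (X Y : T -> R) (g h : R -> R) :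
  measurable_fun setT g -> measurable_fun setT h ->
  independent_pair X Y -> independent_pair (g \o X) (h \o Y).
Proof.
move=> mg mh indXY A B mA mB.
have mgA : measurable (g @^-1` A) by rewrite -[g @^-1` A]setTI; exact: mg.
have mhB : measurable (h @^-1` B) by rewrite -[h @^-1` B]setTI; exact: mh.
exact: (indXY _ _ mgA mhB).
Qed.

Let mu : {measure set _ -> \bar R} := @lebesgue_measure R.
Let GR := measurableTypeR R.

Lemma ge0_expectation_tail (X : T -> R) : measurable_fun setT X ->
  (forall w, 0 <= X w)%R ->
  'E_P[X] = \int[mu]_(r in `[0%R, +oo[) P (X @^-1` `]r, +oo[).
Proof.
move=> mX X0.
exact: (@ge0_expectation_ccdf _ _ _ P (mfun_Sub (mem_set mX : X \in mfun)) X0).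
Qed.

Lemma measurable_tail (X : T -> R) : measurable_fun setT X ->
  measurable_fun [set: R] (fun r : R => P (X @^-1` `]r, +oo[)).
Proof.
move=> mX; exact: (@ccdf_measurable _ _ _ P (mfun_Sub (mem_set mX : X \in mfun))).
Qed.

(* A nonnegative variable and an event determined by an independent
   variable are uncorrelated; proved by comparing tails under the layer-cake
   formula, since the tail event of X * 1_{Y in C} splits as a rectangle. *)
Lemma expectation_mul_indic (X Y : T -> R) (C : set R) :
  measurable_fun setT X -> measurable_fun setT Y -> (forall w, 0 <= X w)%R ->
  independent_pair X Y -> measurable C ->
  'E_P[fun w => X w * \1_(Y @^-1` C) w]%R = 'E_P[X] * P (Y @^-1` C).
Proof.
move=> mX mY X0 indXY mC.
have mYC : measurable (Y @^-1` C) by rewrite -[Y @^-1` C]setTI; exact: mY.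
have mXC : measurable_fun setT (fun w => X w * \1_(Y @^-1` C) w)%R.
  by apply: measurable_funM => //; exact: measurable_indic.
have XC0 w : (0 <= X w * \1_(Y @^-1` C) w)%R by rewrite mulr_ge0// indicE ler0n.
rewrite (ge0_expectation_tail mXC XC0) (ge0_expectation_tail mX X0).
rewrite -ge0_integralZr//; last exact: measurable_funTS (measurable_tail mX).
apply: eq_integral => r; rewrite inE /= in_itv /= andbT => r0.
rewrite -indXY //; congr (P _); apply/seteqP; split => w /=.
- rewrite !in_itv /= !andbT indicE.
  case: (boolP (w \in Y @^-1` C)) => wC; last by rewrite mulr0 ltNge r0.
  by rewrite mulr1 => Xr; split => //; move: wC; rewrite inE.
- rewrite !in_itv /= !andbT indicE => -[Xr wC].
  by rewrite mem_set// mulr1.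
Qed.

Lemma integral_indic_itv (y : R) : (0 <= y)%R ->
  \int[mu]_s (\1_`[0%R, y[ s)%:E = y%:E.
Proof.
move=> y0; rewrite integral_indic//= setIT lebesgue_measure_itv/= lte_fin.
have [yp|yn] := ltP 0%R y; first by rewrite oppr0 adde0.
by have -> : y = 0%R by apply/le_anti; rewrite yn y0.
Qed.

Lemma measurable_subgraph (Y : T -> R) : measurable_fun setT Y ->
  measurable [set p : T * GR | (0 <= p.2 < Y p.1)%R].
Proof.
move=> mY.
rewrite [X in measurable X](_ : _ =
  [set p : T * GR | (0 <= p.2)%R] `&` [set p : T * GR | (p.2 < Y p.1)%R]); last first.
  by apply/seteqP; split => p /= => [/andP[]|[-> ->]].
apply: measurableI.
- have : measurable_fun setT (fun p : T * GR => (0 <= p.2)%R).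
    exact: measurable_fun_ler.
  by move=> /(_ measurableT [set true]); rewrite setTI; exact.
- have : measurable_fun setT (fun p : T * GR => (p.2 < Y p.1)%R).
    by apply: measurable_fun_ltr => //; exact: (measurableT_comp mY measurable_fst).
  by move=> /(_ measurableT [set true]); rewrite setTI; exact.
Qed.

(* Multiplicativity of expectation for independent nonnegative variables:
   write Y w as the length of [0, Y w[, exchange the integrals (Tonelli),
   and apply expectation_mul_indic to each tail event {Y > s}. *)
Lemma ge0_expectation_mul_indep (X Y : T -> R) :
  measurable_fun setT X -> measurable_fun setT Y ->
  (forall w, 0 <= X w)%R -> (forall w, 0 <= Y w)%R -> independent_pair X Y ->
  'E_P[fun w => X w * Y w]%R = 'E_P[X] * 'E_P[Y].
Proof.
move=> mX mY X0 Y0 indXY.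
pose F (p : T * GR) := (X p.1 * \1_`[0%R, Y p.1[ p.2)%R.
have mF : measurable_fun setT (EFin \o F).
  apply/measurable_EFinP; apply: measurable_funM.
    exact: (measurableT_comp mX measurable_fst).
  rewrite (_ : (fun p : T * GR => \1_`[0%R, Y p.1[ p.2) =
      \1_([set p : T * GR | (0 <= p.2 < Y p.1)%R])).
    by apply: measurable_indic; exact: measurable_subgraph.
  by apply/funext => p; rewrite !indicE.
have F0 p : 0 <= (EFin \o F) p by rewrite lee_fin mulr_ge0// indicE ler0n.
transitivity (\int[P]_w \int[mu]_s (F (w, s))%:E).
  rewrite unlock; apply: eq_integral => w _.
  under eq_integral do rewrite /F /= EFinM.
  rewrite ge0_integralZl//= ?lee_fin//; last first.
    by apply/measurable_EFinP; exact: measurable_indic.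
  by rewrite integral_indic_itv// -EFinM.
rewrite (fubini_tonelli (EFin \o F) mF F0) /=.
transitivity (\int[mu]_(s in `[0%R, +oo[) ('E_P[X] * P (Y @^-1` `]s, +oo[))).
  rewrite [RHS]integral_mkcond; apply: eq_integral => s _; rewrite patchE.
  case: ifPn => [/set_mem|s0].
  - rewrite /= in_itv/= andbT => s0; rewrite -expectation_mul_indic//.
    rewrite unlock; apply: eq_integral => w _; rewrite /F !indicE.
    have [sY|sY] := ltP s (Y w).
    + by rewrite !mem_set//= in_itv/= ?sY ?s0.
    + by rewrite !memNset//= in_itv/= ltNge sY ?andbF.
  - have {}s0 : (s < 0)%R.
      by rewrite ltNge; apply: contra s0 => s0; apply/mem_set; rewrite /= in_itv/= s0.
    apply: integral0_eq => w _.
    by rewrite /F indicE memNset ?mulr0//= in_itv/= leNgt s0.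
rewrite ge0_integralZl//; last exact: expectation_ge0.
  by rewrite -ge0_expectation_tail.
exact: measurable_funTS (measurable_tail mY).
Qed.

End independent_products.

Section expectation_calculus.
Context (R : realType) (dT : measure_display) (T : measurableType dT).
Context (P : probability T R).
Local Open Scope ereal_scope.

Definition has_expectation (F : T -> R) (v : R) : Prop :=
  F \in Lfun P 1 /\ 'E_P[F] = v%:E.

Lemma Lfun1_has_expectation (F : T -> R) :
  F \in Lfun P 1 -> has_expectation F (fine 'E_P[F]).
Proof. by move=> lF; split; rewrite // fineK// expectation_fin_num. Qed.

Lemma has_expectationD (F G : T -> R) (a b : R) :
  has_expectation F a -> has_expectation G b -> has_expectation (F \+ G)%R (a + b).
Proof.
by move=> [lF eF] [lG eG]; split; [exact: rpredD | rewrite expectationD// eF eG].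
Qed.

Lemma has_expectationB (F G : T -> R) (a b : R) :
  has_expectation F a -> has_expectation G b -> has_expectation (F \- G)%R (a - b).
Proof.
by move=> [lF eF] [lG eG]; split; [exact: rpredB | rewrite expectationB// eF eG].
Qed.

Lemma has_expectationZ (F : T -> R) (c v : R) :
  has_expectation F v -> has_expectation (fun w => c * F w)%R (c * v).
Proof.
move=> [lF eF].
have -> : (fun w => c * F w)%R = (c \o* F)%R by apply/funext => w; rewrite /= mulrC.
split; first exact: (@Lfun_scale _ _ _ P F c 1%R (lexx _) lF).
by rewrite expectationZl// eF.
Qed.

Lemma has_expectation_sum (I : Type) (r : seq I) (F : I -> T -> R) (v : I -> R) :
  (forall i, has_expectation (F i) (v i)) ->
  has_expectation (fun w => \sum_(i <- r) F i w)%R (\sum_(i <- r) v i).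
Proof.
move=> hF; elim: r => [|i r IHr].
  have -> : (fun w => \sum_(i <- [::]) F i w)%R = cst 0%R.
    by apply/funext => w; rewrite big_nil.
  by rewrite big_nil; split; [exact: Lfun_cst | exact: expectation_cst].
have -> : (fun w => \sum_(j <- i :: r) F j w)%R =
          (F i \+ fun w => \sum_(j <- r) F j w)%R.
  by apply/funext => w; rewrite big_cons.
by rewrite big_cons; exact: has_expectationD.
Qed.

Lemma ge0_has_expectation (Z : T -> R) : measurable_fun setT Z ->
  (forall w, 0 <= Z w)%R -> 'E_P[Z] \is a fin_num -> has_expectation Z (fine 'E_P[Z]).
Proof.
move=> mZ Z0 fZ; apply: Lfun1_has_expectation.
apply/Lfun1_integrable/integrableP; split; first exact/measurable_EFinP.
rewrite (@eq_integral _ _ _ P setT (EFin \o Z)); last first.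
  by move=> w _; rewrite /= ger0_norm.
move: fZ; rewrite unlock ge0_fin_numE //.
by apply: integral_ge0 => w _; rewrite lee_fin.
Qed.

Lemma Lfun1_measurable (Z : T -> R) : Z \in Lfun P 1 -> measurable_fun setT Z.
Proof. by move/Lfun1_integrable/integrableP => [/measurable_EFinP]. Qed.

Lemma Lfun1_funrpos (Z : T -> R) : Z \in Lfun P 1 -> (Z^\+)%R \in Lfun P 1.
Proof.
by move/Lfun1_integrable => iZ; apply/Lfun1_integrable; exact: integrable_funrpos.
Qed.

Lemma Lfun1_funrneg (Z : T -> R) : Z \in Lfun P 1 -> (Z^\-)%R \in Lfun P 1.
Proof.
by move/Lfun1_integrable => iZ; apply/Lfun1_integrable; exact: integrable_funrneg.
Qed.

Lemma fine_expectation_posneg (Z : T -> R) : Z \in Lfun P 1 ->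
  fine 'E_P[Z] = (fine 'E_P[Z^\+%R] - fine 'E_P[Z^\-%R])%R.
Proof.
move=> lZ; have [_ e] := has_expectationB
  (Lfun1_has_expectation (Lfun1_funrpos lZ)) (Lfun1_has_expectation (Lfun1_funrneg lZ)).
by rewrite -[in LHS](funrposBneg Z) e.
Qed.

Lemma ge0_has_expectation_mul_indep (U V : T -> R) :
  U \in Lfun P 1 -> V \in Lfun P 1 ->
  (forall w, 0 <= U w)%R -> (forall w, 0 <= V w)%R -> independent_pair P U V ->
  has_expectation (fun w => U w * V w)%R (fine 'E_P[U] * fine 'E_P[V]).
Proof.
move=> lU lV U0 V0 indUV.
have [mU mV] := (Lfun1_measurable lU, Lfun1_measurable lV).
have eUV := ge0_expectation_mul_indep mU mV U0 V0 indUV.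
have fUV : 'E_P[fun w => U w * V w]%R \is a fin_num.
  by rewrite eUV fin_numM// expectation_fin_num.
have [lUV _] := ge0_has_expectation (measurable_funM mU mV)
  (fun w => mulr_ge0 (U0 w) (V0 w)) fUV.
by split; rewrite // eUV EFinM !fineK// expectation_fin_num.
Qed.

(* Independent integrable variables: E[XY] = E[X] E[Y].  The positive and
   negative parts stay independent, so the nonnegative case applies to the
   four products in XY = (X+ - X-)(Y+ - Y-). *)
Lemma has_expectation_mul_indep (X Y : T -> R) :
  X \in Lfun P 1 -> Y \in Lfun P 1 -> independent_pair P X Y ->
  has_expectation (fun w => X w * Y w)%R (fine 'E_P[X] * fine 'E_P[Y]).
Proof.
move=> lX lY indXY.
have mpos : measurable_fun setT ((@id R)^\+)%R by exact: measurable_funrpos.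
have mneg : measurable_fun setT ((@id R)^\-)%R by exact: measurable_funrneg.
have [lXp lXn] := (Lfun1_funrpos lX, Lfun1_funrneg lX).
have [lYp lYn] := (Lfun1_funrpos lY, Lfun1_funrneg lY).
have hpp := ge0_has_expectation_mul_indep lXp lYp (funrpos_ge0 X) (funrpos_ge0 Y)
  (independent_pair_comp mpos mpos indXY).
have hpn := ge0_has_expectation_mul_indep lXp lYn (funrpos_ge0 X) (funrneg_ge0 Y)
  (independent_pair_comp mpos mneg indXY).
have hnp := ge0_has_expectation_mul_indep lXn lYp (funrneg_ge0 X) (funrpos_ge0 Y)
  (independent_pair_comp mneg mpos indXY).
have hnn := ge0_has_expectation_mul_indep lXn lYn (funrneg_ge0 X) (funrneg_ge0 Y)
  (independent_pair_comp mneg mneg indXY).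
have := has_expectationB (has_expectationD hpp hnn) (has_expectationD hpn hnp).
have -> : (((fun w => X^\+ w * Y^\+ w) \+ (fun w => X^\- w * Y^\- w)) \-
    ((fun w => X^\+ w * Y^\- w) \+ (fun w => X^\- w * Y^\+ w)))%R =
    (fun w => X w * Y w)%R.
  apply/funext => w /=.
  have posneg (Z : T -> R) : Z w = (Z^\+ w - Z^\- w)%R.
    by rewrite -[in LHS](funrposBneg Z).
  by rewrite (posneg X) (posneg Y); ring.
rewrite (fine_expectation_posneg lX) (fine_expectation_posneg lY).
by congr has_expectation; ring.
Qed.

End expectation_calculus.

Lemma has_expectation_standard_products (R : realType) (dT : measure_display)
  (T : measurableType dT) (P : probability T R) (I : finType) (x : I -> T -> R) :
  mutually_independent P x -> (forall p, x p \in Lfun P 2%:E) ->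
  (forall p, ('E_P[x p] = 0)%E) -> (forall p, ('V_P[x p] = 1)%E) ->
  forall p q, has_expectation P (fun w => x p w * x q w) (p == q)%:R.
Proof.
move=> indx L2 mean0 var1 p q.
have L1 r : x r \in Lfun P 1.
  by apply: Lfun_subset12; [exact: fin_num_measure | exact: L2].
have [<-|pq] := eqVneq p q.
  split; first exact: Lfun2_mul_Lfun1.
  have := var1 p; rewrite varianceE// mean0 expe2 mule0 sube0 => <-.
  by congr expectation; apply/funext => w; rewrite /= expr2.
have := has_expectation_mul_indep (L1 p) (L1 q) (independent_pair_of_mutual indx pq).
by rewrite !mean0 /= mul0r.
Qed.

Lemma sum_kronecker (R : pzSemiRingType) (n : nat) (i : 'I_n) (c : 'I_n -> R) :
  \sum_(k < n) c k * (k == i)%:R = c i.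
Proof.
rewrite (bigD1 i)//= eqxx mulr1 big1 ?addr0// => k /negbTE ->.
by rewrite mulr0.
Qed.

Lemma Zmatrix_pairing_le (R : numDomainType) (n : nat) (L G : 'I_n -> 'I_n -> R) :
  (forall i, 0 <= L i i) -> (forall i l, i != l -> L i l <= 0) ->
  (forall i l, 0 <= G i l) -> (forall i, G i i <= 1) ->
  \sum_(i < n) \sum_(l < n) L i l * G i l <=
  \sum_(i < n) \sum_(l < n) L i l * (l == i)%:R.
Proof.
move=> Ldiag Loff G0 G1; apply: ler_sum => i _; apply: ler_sum => l _.
have [->|li] := eqVneq l i; first by rewrite mulr1 ler_piMr.
by rewrite mulr0 mulr_le0_ge0// Loff// eq_sym.
Qed.

Lemma sum_sq_le1 (R : numDomainType) (n : nat) (u : 'I_n -> R) :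
  (forall k, 0 <= u k) -> \sum_(k < n) u k = 1 -> \sum_(k < n) u k * u k <= 1.
Proof.
move=> u0 u1; rewrite -[leRHS]u1; apply: ler_sum => k _.
rewrite ler_piMr// -u1 (bigD1 k)//= lerDl.
by apply: sumr_ge0 => k' _.
Qed.

Section dirichlet_energy_quadratic.
Context (R : realType) (n d : nat) (A : 'M[R]_n).
Local Notation L := (aug_laplacian A).

Lemma dirichlet_energyE (Y : 'M[R]_(n, d)) : dirichlet_energy A Y =
  \sum_(j < d) \sum_(i < n) \sum_(l < n) L i l * (Y i j * Y l j).
Proof.
rewrite /dirichlet_energy /mxtrace; apply: eq_bigr => j _.
rewrite mxE; under eq_bigr => l _ do rewrite mxE big_distrl /=.
rewrite exchange_big; apply: eq_bigr => i _; apply: eq_bigr => l _.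
by rewrite !mxE; ring.
Qed.

Definition gram (b : 'I_d -> 'I_n -> 'I_n -> R) (j : 'I_d) (i l : 'I_n) : R :=
  \sum_(k < n) b j i k * b j l k.

Lemma has_expectation_energy_mix (dT : measure_display) (T : measurableType dT)
  (P : probability T R) (x : 'I_n * 'I_d -> T -> R)
  (b : 'I_d -> 'I_n -> 'I_n -> R) :
  (forall j k k', has_expectation P (fun w => x (k, j) w * x (k', j) w) (k == k')%:R) ->
  has_expectation P
    (fun w => dirichlet_energy A (\matrix_(i, j) \sum_(k < n) b j i k * x (k, j) w))
    (\sum_(j < d) \sum_(i < n) \sum_(l < n) L i l * gram b j i l).
Proof.
move=> orthx.
have -> : (fun w =>
      dirichlet_energy A (\matrix_(i, j) \sum_(k < n) b j i k * x (k, j) w)) =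
    (fun w => \sum_(j < d) \sum_(i < n) \sum_(l < n) \sum_(k < n) \sum_(k' < n)
       (L i l * b j i k * b j l k') * (x (k, j) w * x (k', j) w)).
  apply/funext => w; rewrite dirichlet_energyE; apply: eq_bigr => j _.
  apply: eq_bigr => i _; apply: eq_bigr => l _.
  rewrite !mxE big_distrl /= big_distrr /=; apply: eq_bigr => k _.
  rewrite big_distrr /= big_distrr /=; apply: eq_bigr => k' _; ring.
set v := (X in has_expectation _ _ X).
have -> : v = \sum_(j < d) \sum_(i < n) \sum_(l < n) \sum_(k < n) \sum_(k' < n)
    (L i l * b j i k * b j l k') * (k == k')%:R.
  apply: eq_bigr => j _; apply: eq_bigr => i _; apply: eq_bigr => l _.
  rewrite /gram mulr_sumr; apply: eq_bigr => k _.
  under [RHS]eq_bigr do rewrite eq_sym.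
  by rewrite (sum_kronecker k (fun k' => L i l * b j i k * b j l k')) mulrA.
do 5 (apply: has_expectation_sum => ?).
exact: has_expectationZ.
Qed.

Hypothesis adjA : is_adjacency A.

Lemma deg_ge0 (i : 'I_n) : 0 <= deg A i.
Proof. by apply: sumr_ge0 => j _; case: adjA => _ [A0 _]. Qed.

Lemma aug_laplacian_diag_ge0 (i : 'I_n) : 0 <= L i i.
Proof.
have di : 0 < 1 + deg A i by rewrite ltr_pwDl// deg_ge0.
rewrite mxE eqxx -expr2 (sqr_sqrtr (ltW di)); case: adjA => _ [_ ->].
by rewrite add0r div1r subr_ge0 invr_le1 ?lerDl ?deg_ge0 ?unitf_gt0.
Qed.

Lemma aug_laplacian_offdiag_le0 (i l : 'I_n) : i != l -> L i l <= 0.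
Proof.
move=> /negbTE il; rewrite mxE il addr0 sub0r oppr_le0.
apply: divr_ge0; first by case: adjA => _ [A0 _].
by apply: mulr_ge0; exact: sqrtr_ge0.
Qed.

End dirichlet_energy_quadratic.

Section imputation_weights.
Context (R : realType) (n d : nat) (M : 'M[bool]_(n, d)).
Context (alpha : 'I_n -> 'I_d -> 'I_n -> R).

Definition imputation_weights (j : 'I_d) (i k : 'I_n) : R :=
  if M i j then (k == i)%:R else (M k j)%:R * alpha i j k.

Lemma imputedE (Y : 'M[R]_(n, d)) :
  imputed M alpha Y = \matrix_(i, j) \sum_(k < n) imputation_weights j i k * Y k j.
Proof.
apply/matrixP => i j; rewrite !mxE /imputation_weights; case: ifP => Mij.
  by under eq_bigr do rewrite mulrC; rewrite sum_kronecker.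
rewrite big_mkcond; apply: eq_bigr => k _.
by case: (M k j); rewrite ?mul1r ?mul0r.
Qed.

Hypothesis convex_alpha : forall i j, ~~ M i j ->
  (forall k, M k j -> 0 <= alpha i j k) /\ \sum_(k < n | M k j) alpha i j k = 1.

Lemma imputation_weights_ge0 j i k : 0 <= imputation_weights j i k.
Proof.
rewrite /imputation_weights; case: ifP => Mij; first by rewrite ler0n.
case Mkj: (M k j); last by rewrite mul0r.
by have [alpha0 _] := convex_alpha (negbT Mij); rewrite mul1r alpha0.
Qed.

Lemma imputation_weights_sum j i : \sum_(k < n) imputation_weights j i k = 1.
Proof.
rewrite /imputation_weights; case Mij: (M i j).
  by rewrite -[RHS](sum_kronecker i (fun=> 1)); apply: eq_bigr => k _; rewrite mul1r.
have [_ sum1] := convex_alpha (negbT Mij).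
rewrite -[RHS]sum1 [RHS]big_mkcond; apply: eq_bigr => k _.
by case: (M k j); rewrite ?mul1r ?mul0r.
Qed.

End imputation_weights.

Lemma gram_kronecker (R : realType) (n d : nat) (j : 'I_d) (i l : 'I_n) :
  gram (fun (_ : 'I_d) (i k : 'I_n) => (k == i)%:R : R) j i l = (l == i)%:R.
Proof.
rewrite /gram eq_sym -(sum_kronecker i (fun k => (k == l)%:R)) /=.
by apply: eq_bigr => k _; rewrite mulrC.
Qed.

Unset Implicit Arguments.

Theorem proposition3p2 (R : realType) (n d : nat) (A : 'M[R]_n)
  (M : 'M[bool]_(n, d)) (alpha : 'I_n -> 'I_d -> 'I_n -> R)
  (dT : measure_display) (T : measurableType dT) (P : probability T R)
  (X : 'I_n * 'I_d -> {RV P >-> R}) :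
  is_adjacency A ->
  (forall j : 'I_d, exists k : 'I_n, M k j) ->
  (forall i j, ~~ M i j ->
     (forall k, M k j -> 0 <= alpha i j k) /\
     \sum_(k < n | M k j) alpha i j k = 1) ->
  mutually_independent P (fun p => (X p : T -> R)) ->
  identically_distributed P (fun p => (X p : T -> R)) ->
  (forall p, (X p : T -> R) \in Lfun P 2%:E) ->
  (forall p, ('E_P[X p] = 0)%E) ->
  (forall p, ('V_P[X p] = 1)%E) ->
  ('E_P[fun w => dirichlet_energy A
          (imputed M alpha (\matrix_(i, j) X (i, j) w))]
   <= 'E_P[fun w => dirichlet_energy A (\matrix_(i, j) X (i, j) w)])%E.
Proof.
move=> adjA _ convex_alpha indX _ L2 mean0 var1.
pose x p := (X p : T -> R).
have orthx j k k' : has_expectation P (fun w => x (k, j) w * x (k', j) w) (k == k')%:R.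
  have := has_expectation_standard_products indX L2 mean0 var1 (k, j) (k', j).
  by rewrite xpair_eqE eqxx andbT.
pose weights := imputation_weights M alpha.
pose id_weights (_ : 'I_d) (i k : 'I_n) : R := (k == i)%:R.
have mix_imputed t : imputed M alpha (\matrix_(i, j) X (i, j) t) =
    \matrix_(i, j) \sum_(k < n) weights j i k * x (k, j) t.
  by rewrite imputedE; apply/matrixP => i j; rewrite !mxE; under eq_bigr do rewrite mxE.
have mix_id t : \matrix_(i, j) X (i, j) t =
    \matrix_(i, j) \sum_(k < n) id_weights j i k * x (k, j) t.
  apply/matrixP => i j; rewrite !mxE -[X (i, j) t]/(x (i, j) t).
  rewrite -(sum_kronecker i (fun k => x (k, j) t)).
  by apply: eq_bigr => k _; rewrite mulrC.
rewrite (funext (fun t => congr1 (dirichlet_energy A) (mix_imputed t))).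
rewrite (funext (fun t => congr1 (dirichlet_energy A) (mix_id t))).
have [_ ->] := has_expectation_energy_mix A weights orthx.
have [_ ->] := has_expectation_energy_mix A id_weights orthx.
rewrite lee_fin; apply: ler_sum => j _.
under [leRHS]eq_bigr do under eq_bigr do rewrite gram_kronecker.
apply: Zmatrix_pairing_le.
- exact: aug_laplacian_diag_ge0.
- exact: aug_laplacian_offdiag_le0.
- by move=> i l; apply: sumr_ge0 => k _; rewrite mulr_ge0 ?imputation_weights_ge0.
- move=> i; apply: sum_sq_le1; first exact: imputation_weights_ge0.
  exact: imputation_weights_sum.
Qed.
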